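(* Let $n$ be an even positive integer and $a$ a parameter. Let $L_n(a)$ be the $n\times n$ tridiagonal matrix with $(L_n(a))_{i,i}=ia$ for $1\le i\le n$, $(L_n(a))_{i,i+1}=n-i$ for $1\le i\le n-1$, $(L_n(a))_{i,i-1}=i-1$ for $2\le i\le n$, and all other entries $0$. Then the characteristic polynomial $\det(zI_n-L_n(a))$ of $L_n(a)$ equals $$\Lambda_n(a;z):=\prod_{\substack{1\le i<j\le n\\ i+j=n+1}}\left[(z-ia)(z-ja)-(i-j)^2\right].$$ *)

From mathcomp Require Import all_boot all_algebra.
Set Implicit Arguments. Unset Strict Implicit. Unset Printing Implicit Defensive.
Import GRing.Theory.
Local Open Scope ring_scope.

(* L_n(a), with 0-based indices: row/col i : 'I_n corresponds to 1-based i+1.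
   (L)_{i,i} = (i+1) a ; (L)_{i,i+1} = n-(i+1) ; (L)_{i,i-1} = (i+1)-1 = i. *)
Definition Lmat (R : comNzRingType) (n : nat) (a : R) : 'M[R]_n :=
  \matrix_(i < n, j < n)
    (if j == i :> nat then (i.+1)%:R * a
     else if j == i.+1 :> nat then (n - i.+1)%:R
     else if j.+1 == i :> nat then (i.+1 - 1)%:R
     else 0).

(* Lambda_n(a;z) = prod_{1<=i<j<=n, i+j=n+1} [(z - i a)(z - j a) - (i-j)^2],
   indexed by the 1-based i in 1..n, with j := n+1-i. *)
Definition Lambda (R : comNzRingType) (n : nat) (a : R) : {poly R} :=
  \prod_(1 <= i < n.+1 | (i < n.+1 - i)%N)
     (('X - (i%:R * a)%:P) * ('X - ((n.+1 - i)%:R * a)%:P)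
        - (((n.+1 - i) - i)%:R) ^+ 2).

(* Identify a row vector of length n with a polynomial of degree < n.  Right
   multiplication by L_n(a) then becomes the differential operator
   D_n p = q p' + ((n - 1) X + a) p with q = 1 + a X - X^2.  Since
   D_(m+2) (q p) = q (D_m p + a p), the multiples of q form an invariant
   subspace on which L_(m+2)(a) acts as L_m(a) + a, while on the quotient,
   spanned by 1 and X, it acts by [[a, m+1], [m+1, (m+2) a]].  Hence
   det(z - L_(m+2)(a) - b) = ((z - a - b)(z - (m+2) a - b) - (m+1)^2)
                             * det(z - L_m(a) - a - b),
   and induction on n/2 yields the product. *)

From mathcomp Require Import all_boot all_algebra.
From mathcomp Require Import ring zify.
Import GRing.Theory.
Local Open Scope ring_scope.
Set Implicit Arguments. Unset Strict Implicit. Unset Printing Implicit Defensive.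

Section MatrixPoly.
Variable R : comNzRingType.

Lemma char_poly_ublock n1 n2 (A : 'M[R]_n1) (B : 'M[R]_(n1, n2)) (D : 'M[R]_n2) :
  char_poly (block_mx A B 0 D) = char_poly A * char_poly D.
Proof.
rewrite /char_poly /char_poly_mx (scalar_mx_block n1 n2) map_block_mx map_mx0.
by rewrite opp_block_mx add_block_mx oppr0 addr0 det_ublock.
Qed.

Lemma char_poly_similar n (P A A' : 'M[R]_n) c :
  c * \det P = 1 -> P *m A = A' *m P -> char_poly A = char_poly A'.
Proof.
move=> cP PA.
have PcA : map_mx polyC P *m char_poly_mx A = char_poly_mx A' *m map_mx polyC P.
  rewrite /char_poly_mx mulmxBr mulmxBl -!map_mxM PA.
  by rewrite mul_mx_scalar mul_scalar_mx.
have /(congr1 (fun p => c%:P * p)) := congr1 determinant PcA.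
rewrite !det_mulmx det_map_mx (mulrC (char_poly A')) !mulrA -polyCM cP.
by rewrite !mul1r.
Qed.

Lemma rVpolyE n (v : 'rV[R]_n) : rVpoly v = \sum_(j < n) v 0 j *: 'X^j.
Proof. by rewrite /rVpoly poly_def; apply: eq_bigr => j _; rewrite valK. Qed.

Lemma rVpoly_mulmx m n (v : 'rV[R]_m) (A : 'M[R]_(m, n)) :
  rVpoly (v *m A) = \sum_i v 0 i *: rVpoly (row i A).
Proof. by rewrite mulmx_sum_row linear_sum; apply: eq_bigr => i _; rewrite linearZ. Qed.

Lemma rVpoly_row_mul_rows k p n (M : 'M[R]_(k, p)) (f : 'I_p -> {poly R}) i :
    (forall j, size (f j) <= n)%N ->
  rVpoly (row i (M *m (\matrix_(j < p) poly_rV (f j) : 'M_(p, n))))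
    = \sum_j M i j *: f j.
Proof.
by move=> szf; rewrite row_mul rVpoly_mulmx; apply: eq_bigr => j _; rewrite rowK poly_rV_K // mxE.
Qed.

End MatrixPoly.

Section LmatOperator.
Variables (R : comNzRingType) (a : R).

Definition qpoly : {poly R} := 1 + a%:P * 'X - 'X^2.

Definition Lop (n : nat) (p : {poly R}) : {poly R} :=
  qpoly * p^`() + ((n%:R - 1) * 'X + a%:P) * p.

Lemma Lop_qpolyM m p : Lop m.+2 (qpoly * p) = qpoly * (Lop m p + a%:P * p).
Proof. by rewrite /Lop derivM /qpoly !derivE -!natr1; ring. Qed.

Lemma Lop_sum n (I : finType) (c : I -> R) (p : I -> {poly R}) :
  Lop n (\sum_i c i *: p i) = \sum_i c i *: Lop n (p i).
Proof.
rewrite /Lop linear_sum /= !mulr_sumr -big_split /=.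
by apply: eq_bigr => i _; rewrite derivZ scalerDr -!scalerAr.
Qed.

Lemma Lop_Xn n i : (i < n)%N ->
  Lop n 'X^i = ((i.+1)%:R * a) *: 'X^i + (n - i.+1)%:R *: 'X^(i.+1) + i%:R *: 'X^(i.-1).
Proof.
move=> lt_in; rewrite /Lop /qpoly derivXn natrB // -!mul_polyC !polyCM !polyC_natr.
case: i lt_in => [|i] _ /=; last by rewrite !exprS -!natr1; ring.
by rewrite mulr0n mulr0 expr0 -!natr1; ring.
Qed.

Lemma Lop_1 m : Lop m.+2 1 = a *: 1 + (m.+1)%:R *: 'X.
Proof. by rewrite /Lop derivC mulr0 mulr1 -!mul_polyC polyC_natr -!natr1; ring. Qed.

Lemma Lop_X m :
  Lop m.+2 'X = (m.+1)%:R *: 1 + ((m.+2)%:R * a) *: 'X - m%:R *: qpoly.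
Proof.
by rewrite /Lop /qpoly derivX mulr1 -!mul_polyC polyCM !polyC_natr -!natr1; ring.
Qed.

Lemma rVpoly_row_Lmat n (i : 'I_n) : rVpoly (row i (Lmat n a)) = Lop n 'X^i.
Proof.
rewrite Lop_Xn //; apply/polyP => k.
rewrite coef_rVpoly !coefD !coefZ !coefXn.
case: insubP => [k' _ <-|]; case: i => i lt_in /=.
  rewrite !mxE; case: k' => j lt_jn /=.
  by case: i lt_in => [|i] ? /=; repeat (case: eqP => //= ?); try lia; subst;
    rewrite ?mulr1 ?mulr0 ?addr0 ?add0r ?subn1.
move=> ge_kn; repeat (case: eqP => //= ?); try lia; rewrite ?mulr0 ?addr0 ?add0r ?mulr1 //.
by have -> : (n - i.+1 = 0)%N by lia.
Qed.

Lemma rVpoly_mul_Lmat n (v : 'rV[R]_n) : rVpoly (v *m Lmat n a) = Lop n (rVpoly v).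
Proof.
by rewrite rVpoly_mulmx rVpolyE Lop_sum; apply: eq_bigr => i _; rewrite rVpoly_row_Lmat.
Qed.

Lemma size_qpoly : (size qpoly <= 3)%N.
Proof.
rewrite /qpoly; apply: leq_trans (size_polyD _ _) _.
rewrite size_polyN size_polyXn geq_max andbT.
apply: leq_trans (size_polyD _ _) _; rewrite size_poly1 geq_max /=.
apply: leq_trans (size_polyMleq _ _) _; rewrite size_polyX.
by move: (size_polyC_leq1 a); lia.
Qed.

Lemma size_qpolyXn l : (size (qpoly * 'X^l)%R <= l.+3)%N.
Proof.
apply: leq_trans (size_polyMleq _ _) _; rewrite size_polyXn.
by move: size_qpoly; lia.
Qed.

Lemma coef_qpoly2 : qpoly`_2 = -1.
Proof. by rewrite /qpoly coefB coefD coef1 coefCM coefX coefXn mulr0 add0r sub0r. Qed.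

Definition low_basis m : 'M[R]_(2, m.+2) := \matrix_(c < 2) poly_rV 'X^c.
Definition qpoly_basis m : 'M[R]_(m, m.+2) := \matrix_(l < m) poly_rV (qpoly * 'X^l).
Definition basechange m : 'M[R]_(m.+2) := col_mx (low_basis m) (qpoly_basis m).

Definition Lquot m : 'M[R]_2 := \matrix_(i < 2, j < 2)
  (if i == j :> nat then (if i == 0 :> nat then a else (m.+2)%:R * a) else (m.+1)%:R).
Definition Lcross m : 'M[R]_(2, m) := \matrix_(i < 2, j < m)
  (if (i == 1 :> nat) && (j == 0 :> nat) then - m%:R else 0).

Lemma qpoly_basis_Lmat m :
  qpoly_basis m *m Lmat m.+2 a = (Lmat m a + a%:M) *m qpoly_basis m.
Proof.
apply/row_matrixP => l; apply: (can_inj rVpolyK).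
rewrite rVpoly_row_mul_rows => [|e]; last by move: (size_qpolyXn e) (ltn_ord e); lia.
rewrite row_mul rVpoly_mul_Lmat rowK poly_rV_K; last by move: (size_qpolyXn l) (ltn_ord l); lia.
under eq_bigr => e _ do rewrite scalerAr.
rewrite -mulr_sumr Lop_qpolyM; congr (_ * _).
transitivity (rVpoly (row l (Lmat m a + a%:M))).
  by rewrite !linearD /= rVpoly_row_Lmat -scalemx1 !linearZ /= row1 rVpoly_delta mul_polyC.
by rewrite rVpolyE; apply: eq_bigr => e _; rewrite mxE.
Qed.

Lemma low_basis_Lmat m :
  low_basis m *m Lmat m.+2 a = Lquot m *m low_basis m + Lcross m *m qpoly_basis m.
Proof.
apply/row_matrixP => c; apply: (can_inj rVpolyK).
rewrite row_mul rVpoly_mul_Lmat rowK poly_rV_K; last first.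
  by rewrite size_polyXn; move: (ltn_ord c); lia.
rewrite !linearD /= !rVpoly_row_mul_rows => [|e|e]; first last.
- by rewrite size_polyXn; move: (ltn_ord e); lia.
- by move: (size_qpolyXn e) (ltn_ord e); lia.
rewrite !big_ord_recl big_ord0 addr0 !mxE /= /bump /=.
case: c => [[|[|//]] lt_c2] /=.
  rewrite Lop_1 big1 ?addr0 // => e _.
  by rewrite mxE scale0r.
rewrite Lop_X.
case: m => [|m]; first by rewrite big_ord0 mulr0n scale0r subr0 addr0.
rewrite big_ord_recl big1 ?addr0 => [|e _]; last by rewrite mxE scale0r.
by rewrite mxE /= mulr1 scaleNr.
Qed.

Lemma basechange_Lmat m b :
  basechange m *m (Lmat m.+2 a + b%:M)
    = block_mx (Lquot m + b%:M) (Lcross m) 0 (Lmat m a + (a + b)%:M) *m basechange m.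
Proof.
rewrite mulmxDr mul_mx_scalar.
have -> : basechange m *m Lmat m.+2 a
    = col_mx (low_basis m *m Lmat m.+2 a) (qpoly_basis m *m Lmat m.+2 a).
  exact: (mul_col_mx (low_basis m) (qpoly_basis m)).
rewrite low_basis_Lmat qpoly_basis_Lmat /basechange mul_block_col mul0mx add0r.
rewrite (scale_col_mx b (low_basis m) (qpoly_basis m)) (add_col_mx (m1 := 2)).
by rewrite raddfD /= addrA !mulmxDl !mul_scalar_mx [X in col_mx X _]addrAC.
Qed.

Definition basechange_poly (c : nat) : {poly R} :=
  if (c < 2)%N then 'X^c else qpoly * 'X^(c - 2).

Lemma basechangeE m (i j : 'I_m.+2) : basechange m i j = (basechange_poly i)`_j.
Proof.
rewrite /basechange /basechange_poly mxE; case: splitP => k ->; rewrite !mxE ?ltn_ord //=.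
by rewrite addKn.
Qed.

Lemma det_basechange m : \det (basechange m) = (-1) ^+ m.
Proof.
rewrite det_trig; last first.
  apply/is_trig_mxP => i j lt_ij; rewrite basechangeE /basechange_poly.
  case: ifP => [_|/negbT]; first by rewrite coefXn gtn_eqF.
  rewrite -leqNgt => ge_i2.
  rewrite coefMXn; case: ifP => // _; apply: nth_default.
  by apply: leq_trans size_qpoly _; lia.
rewrite (eq_bigr (fun i : 'I_m.+2 => if (i < 2)%N then 1 else -1)) => [|i _].
  by rewrite !big_ord_recl /= !mul1r prodr_const card_ord.
rewrite basechangeE /basechange_poly; case: ifP => lt_i2; first by rewrite coefXn eqxx.
by rewrite coefMXn ifF ?subKn ?coef_qpoly2 //; lia.
Qed.

Definition Lfactor n b (i : nat) : {poly R} :=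
  ('X - (i%:R * a + b)%:P) * ('X - ((n.+1 - i)%:R * a + b)%:P) - ((n.+1 - i - i)%:R) ^+ 2.

Definition Lambda_shift n b : {poly R} :=
  \prod_(1 <= i < n.+1 | (i < n.+1 - i)%N) Lfactor n b i.

Lemma char_poly_Lquot m b : char_poly (Lquot m + b%:M) = Lfactor m.+2 b 1.
Proof.
rewrite /char_poly (expand_det_row _ 0) !big_ord_recl big_ord0 /cofactor !det_mx11.
rewrite !mxE /= /bump /= !mulr1n !mulr0n !addr0 !sub0r.
by rewrite /Lfactor subn1 !polyCD !polyCM !polyC_natr -!natr1; ring.
Qed.

Lemma Lfactor_shift m b i : (i <= m.+1)%N -> Lfactor m.+2 b i.+1 = Lfactor m (a + b) i.
Proof.
move=> le_im; rewrite /Lfactor.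
have -> : (m.+3 - i.+1 - i.+1 = m.+1 - i - i)%N by lia.
have -> : (m.+3 - i.+1 = (m.+1 - i).+1)%N by lia.
by rewrite -!natr1 !polyCD !polyCM; ring.
Qed.

Lemma Lambda_shift_rec m b :
  Lambda_shift m.+2 b = Lfactor m.+2 b 1 * Lambda_shift m (a + b).
Proof.
rewrite /Lambda_shift big_ltn_cond //; congr (_ * _).
rewrite big_add1 /= big_mkcond big_nat_recr //= ifF; last by lia.
rewrite mulr1 [RHS]big_mkcond; apply: eq_big_nat => i /andP [_ lt_im].
have -> : (i.+1 < m.+3 - i.+1)%N = (i < m.+1 - i)%N by lia.
by rewrite Lfactor_shift //; lia.
Qed.

Lemma char_poly_Lmat_shift k b : char_poly (Lmat k.*2 a + b%:M) = Lambda_shift k.*2 b.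
Proof.
elim: k b => [|k IHk] b; first by rewrite /char_poly det_mx00 /Lambda_shift big_geq.
have detP : \det (basechange k.*2) * \det (basechange k.*2) = 1.
  by rewrite det_basechange -expr2 -exprM mulnC exprM sqrrN !expr1n.
rewrite doubleS (char_poly_similar detP (basechange_Lmat _ _)).
rewrite (char_poly_ublock (Lquot _ + b%:M)).
by rewrite char_poly_Lquot IHk Lambda_shift_rec.
Qed.

Lemma Lambda_shift0 n : Lambda_shift n 0 = Lambda n a.
Proof. by apply: eq_bigr => i _; rewrite /Lfactor !addr0. Qed.

End LmatOperator.

Theorem lemmaA3 (R : comNzRingType) (n : nat) (a : R) :
  (0 < n)%N -> ~~ odd n ->
  char_poly (Lmat n a) = Lambda n a.
Proof.
move=> _ /negbTE even_n; rewrite -(odd_double_half n) even_n add0n.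
by rewrite -Lambda_shift0 -char_poly_Lmat_shift raddf0 addr0.
Qed.
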